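(* Let $G$ be a graph and $t$ a positive integer. If $\varphi(G)\ge t$, then $G$ contains an induced subgraph which is a minimal b-$t$-atom.
   Context: A proper $k$-coloring of $G$ is a surjective map $c:V(G)\to\{1,\ldots,k\}$ with $c(u)\ne c(v)$ for every edge $uv$. In a proper $k$-coloring, a vertex of color $i$ is a b-vertex if it has a neighbor of every color $j\in\{1,\ldots,k\}\setminus\{i\}$. A b-$k$-coloring is a proper $k$-coloring in which every color class contains a b-vertex; the b-chromatic number $\varphi(G)$ is the largest $k$ such that $G$ has a b-$k$-coloring. A b-$t$-atom is a graph $A$ whose vertex set can be partitioned into $t$ sets $D_1,\ldots,D_t$, each $D_i$ containing a special vertex $c_i$, such that each $D_i$ is independent with $|D_i|\le t$ and, for all $i\ne j$, $c_i$ has a neighbor in $D_j$. A b-$t$-atom is minimal if no proper induced subgraph of it is a b-$t$-atom. *)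

(* Finite simple graphs: a symmetric irreflexive relation e on a finType T. *)
From HB Require Import structures.
From mathcomp Require Import all_boot.
Set Implicit Arguments. Unset Strict Implicit. Unset Printing Implicit Defensive.

Section BColoring.
Variables (T : finType) (e : rel T).

(* A proper k-coloring: a surjective map c : V -> 'I_k (colors 0..k-1,
   standing for 1..k) with c u <> c v on every edge uv. *)
Definition proper_coloring (k : nat) (c : {ffun T -> 'I_k}) : bool :=
  [forall u, forall v, e u v ==> (c u != c v)] &&
  [forall i : 'I_k, exists v, c v == i].

Definition b_vertex (k : nat) (c : {ffun T -> 'I_k}) (v : T) : bool :=
  [forall j : 'I_k, (j != c v) ==> [exists u, e v u && (c u == j)]].

Definition b_coloring (k : nat) (c : {ffun T -> 'I_k}) : bool :=
  proper_coloring c && [forall i : 'I_k, exists v, (c v == i) && b_vertex c v].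

Definition has_b_coloring (k : nat) : bool :=
  [exists c : {ffun T -> 'I_k}, b_coloring c].

(* b-chromatic number: largest k admitting a b-k-coloring (any proper
   k-coloring is surjective, so k <= #|T|). *)
Definition b_chromatic : nat :=
  \max_(k < #|T|.+1 | has_b_coloring k) k.

Definition b_atom (t : nat) (S : {set T}) : Prop :=
  exists (D : 'I_t -> {set T}) (c : 'I_t -> T),
    [/\ (forall i j, i != j -> [disjoint D i & D j]),
        \bigcup_(i < t) D i = S,
        (forall i u v, u \in D i -> v \in D i -> ~~ e u v),
        (forall i, #|D i| <= t) &
        (forall i, c i \in D i) /\
        (forall i j, i != j -> exists v, v \in D j /\ e (c i) v)].

Definition minimal_b_atom (t : nat) (S : {set T}) : Prop :=
  b_atom t S /\ (forall S' : {set T}, S' \proper S -> ~ b_atom t S').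

End BColoring.

From mathcomp Require Import all_boot.
From Stdlib Require Import Classical.

Set Implicit Arguments.
Unset Strict Implicit.
Unset Printing Implicit Defensive.

(* If G has a b-k-coloring with t <= k, choose one b-vertex [bv i] in each of the
   first t color classes and, for every ordered pair i <> j, one neighbour
   [nb i j] of [bv i] of color j.  The classes D_j = {bv j} u {nb i j | i <> j}
   have at most t elements, are independent because they are monochromatic, and
   form a b-t-atom; since the vertex set is finite, it contains a minimal one. *)

Lemma exists_minimal_set (T : finType) (P : {set T} -> Prop) (S : {set T}) :
  P S -> exists S', P S' /\ forall S'' : {set T}, S'' \proper S' -> ~ P S''.
Proof.
elim: {S}#|S| {-2}S (leqnn #|S|) => [|n IHn] S leSn PS.
  exists S; split=> // S'' /proper_card.
  by rewrite ltnNge (leq_trans leSn (leq0n _)).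
have [[S' ltS'S PS'] | noS'] :=
  classic (exists2 S' : {set T}, S' \proper S & P S'); last first.
  by exists S; split=> // S'' ltS''S PS''; apply: noS'; exists S''.
by apply: (IHn S') => //; rewrite -ltnS (leq_trans (proper_card ltS'S)).
Qed.

Lemma b_chromatic_witness (T : finType) (e : rel T) (t : nat) :
  0 < t -> t <= b_chromatic e -> exists k, t <= k /\ has_b_coloring e k.
Proof.
rewrite /b_chromatic => t_gt0.
have [/card0_eq noK | ] := posnP #|[pred k : 'I_#|T|.+1 | has_b_coloring e k]|.
  rewrite big_pred0 => [|k]; first by rewrite leqNgt t_gt0.
  by have := noK k; rewrite !inE.
case/(eq_bigmax_cond (@nat_of_ord _)) => k has_k ->.
by exists k.
Qed.

Lemma proper_coloring_edge (T : finType) (e : rel T) (k : nat)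
    (c : {ffun T -> 'I_k}) (u v : T) :
  proper_coloring e c -> e u v -> c u != c v.
Proof. by case/andP=> /forallP/(_ u)/forallP/(_ v)/implyP. Qed.

Lemma b_vertex_neighbour (T : finType) (e : rel T) (k : nat)
    (c : {ffun T -> 'I_k}) (v : T) (j : 'I_k) :
  b_vertex e c v -> j != c v -> exists u, e v u /\ c u = j.
Proof.
move=> /forallP/(_ j)/implyP bv_j /bv_j/existsP[u /andP[evu /eqP cu]].
by exists u.
Qed.

Section AtomOfBColoring.

Variables (T : finType) (e : rel T) (k t : nat) (c : {ffun T -> 'I_k}).
Hypotheses (c_b : b_coloring e c) (le_tk : t <= k).

Let w : 'I_t -> 'I_k := widen_ord le_tk.

Let w_inj : injective w.
Proof. by move=> i j /(congr1 val) /= eq_ij; apply: val_inj. Qed.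

Let c_proper : proper_coloring e c.
Proof. by case/andP: c_b. Qed.

Lemma exists_b_vertices :
  exists bv : 'I_t -> T, forall i, c (bv i) = w i /\ b_vertex e c (bv i).
Proof.
have bv_ex i : exists v, c v = w i /\ b_vertex e c v.
  case/andP: c_b => _ /forallP/(_ (w i))/existsP[v /andP[/eqP cv bv]].
  by exists v.
exact: fin_all_exists bv_ex.
Qed.

Variable bv : 'I_t -> T.
Hypothesis bv_spec : forall i, c (bv i) = w i /\ b_vertex e c (bv i).

Lemma exists_b_neighbours :
  exists nb : 'I_t -> 'I_t -> T,
    forall i j, i != j -> e (bv i) (nb i j) /\ c (nb i j) = w j.
Proof.
have [nb nbP] : exists nb : 'I_t * 'I_t -> T, forall ij,
    ij.1 != ij.2 -> e (bv ij.1) (nb ij) /\ c (nb ij) = w ij.2.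
  have nb_ex (ij : 'I_t * 'I_t) : exists u,
      ij.1 != ij.2 -> e (bv ij.1) u /\ c u = w ij.2.
    case: ij => i j /=; have [-> | ij] := eqVneq i j; first by exists (bv j).
    have [cbv bvb] := bv_spec i.
    have [|u] := b_vertex_neighbour (j := w j) bvb; last by exists u.
    by rewrite cbv (inj_eq w_inj) eq_sym.
  exact: fin_all_exists nb_ex.
by exists (fun i j => nb (i, j)) => i j; apply: (nbP (i, j)).
Qed.

Variable nb : 'I_t -> 'I_t -> T.
Hypothesis nb_spec : forall i j, i != j -> e (bv i) (nb i j) /\ c (nb i j) = w j.

Let D (j : 'I_t) : {set T} := bv j |: [set nb i j | i in predC1 j].

Let D_colour j u : u \in D j -> c u = w j.
Proof.
rewrite in_setU1 => /orP[/eqP-> | /imsetP[i]]; first by case: (bv_spec j).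
by rewrite inE => ij ->; case: (nb_spec ij).
Qed.

Let card_D j : #|D j| <= t.
Proof.
have t_gt0 : 0 < t by apply: leq_ltn_trans (ltn_ord j).
rewrite cardsU1 (leq_trans (leq_add (leq_b1 _) (leq_imset_card _ _))) //.
by rewrite cardC1 card_ord add1n prednK.
Qed.

Lemma b_atom_of_b_coloring : b_atom e t (\bigcup_(i < t) D i).
Proof.
exists D, bv; split=> //.
- move=> i j ij; rewrite disjoint_subset; apply/subsetP=> u /D_colour cu.
  by rewrite inE; apply/negP=> /D_colour; rewrite cu => /w_inj/eqP; apply/negP.
- move=> i u v /D_colour cu /D_colour cv; apply/negP=> /(proper_coloring_edge c_proper).
  by rewrite cu cv eqxx.
- split=> [i | i j ij]; first by rewrite setU11.
  exists (nb i j); split; last by case: (nb_spec ij).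
  by rewrite setU1r //; apply/imsetP; exists i; rewrite // inE eq_sym.
Qed.

End AtomOfBColoring.

Theorem mainTheorem6 (T : finType) (e : rel T)
    (e_sym : symmetric e) (e_irr : irreflexive e) (t : nat) :
  0 < t -> t <= b_chromatic e ->
  exists S : {set T}, minimal_b_atom e t S.
Proof.
move=> t_gt0 /(b_chromatic_witness t_gt0) [k [le_tk /existsP[c c_b]]].
have [bv bv_spec] := exists_b_vertices c_b le_tk.
have [nb nb_spec] := exists_b_neighbours bv_spec.
have [S [S_atom S_min]] :=
  exists_minimal_set (b_atom_of_b_coloring c_b bv_spec nb_spec).
by exists S.
Qed.
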